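(* Let $\mathbb L$ be an unobstructed combinatorially indecomposable tropical Lagrangian multi-section of rank $r$ over a complete fan $\Sigma$ in $N_{\mathbb R}\cong\mathbb R^n$, with $\mathbb C^\times$-local system $\mathcal L$ on $L\setminus L^{(n-2)}$ and consistent collection of wall-crossing automorphisms $\Theta$. For any $\mathbb C^\times$-local system $\mathcal L'$ on $L\setminus L^{(n-2)}$ isomorphic to $\mathcal L$, there is a consistent collection $\Theta'$ for $(\mathbb L,\mathcal L')$ and an isomorphism of toric vector bundles $\mathcal E(\mathbb L,\mathcal L,\Theta)\cong\mathcal E(\mathbb L,\mathcal L',\Theta')$.
   Context: $N$ lattice of rank $n$, $M=\mathrm{Hom}(N,\mathbb Z)$, $\Sigma(k)$ the $k$-dimensional cones, $\sigma^\vee$ dual cones, $U(\sigma)=\mathrm{Spec}\,\mathbb C[\sigma^\vee\cap M]$, $z^m$ monomials, $X_\Sigma$ the toric variety with torus $T=(\mathbb C^\times)^n$. $\mathbb L=(L,\Sigma_L,\mu,\pi,\varphi)$ is a tropical Lagrangian multi-section: a cone complex $L$ (finite union of closed rational polyhedral cones glued along faces), weights $\mu$, a branched covering $\pi$ onto $(N_{\mathbb R},\Sigma)$ mapping cones homeomorphically onto cones with weighted fibre count $r$, and $\varphi$ continuous, integral linear on cones; $m(\sigma')\in M$ its slope on a maximal cone; $\sigma^{(1)},\dots,\sigma^{(r)}$ the lifts of $\sigma\in\Sigma(n)$ with multiplicity; $L^{(k)}$ the union of cones of dimension $\le k$. Being combinatorially indecomposable, $\mathbb L$ is $(n-1)$-separable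 and unramified outside $L^{(n-2)}$; for adjacent $\sigma_1,\sigma_2\in\Sigma(n)$ each lift $\sigma_1^{(\alpha)}$ determines a unique lift $\sigma_2^{(\beta)}$ with $\sigma_1^{(\alpha)}\cap\sigma_2^{(\beta)}$ of dimension $n-1$. A $\mathbb C^\times$-local system on $L\setminus L^{(n-2)}$ is represented by constants $g^{sf}_{\sigma_1^{(\alpha)}\sigma_2^{(\beta)}}\in\mathbb C^\times$ on such adjacent pairs. $\mathcal E_\sigma$ is the trivial rank $r$ bundle on $U(\sigma)$ with frame $1(\sigma^{(\alpha)})$ of torus weight $m(\sigma^{(\alpha)})$. $G^{sf}_{\sigma_1\sigma_2}:1(\sigma_1^{(\alpha)})\mapsto g^{sf}_{\sigma_1^{(\alpha)}\sigma_2^{(\beta)}}z^{m(\sigma_1^{(\alpha)})-m(\sigma_2^{(\beta)})}1(\sigma_2^{(\beta)})$. For $\tau=\sigma_1\cap\sigma_2\in\Sigma(n-1)$ and a cone $\omega'$ of $L$, $N_\tau(\omega')$ is the endomorphism of $\mathcal E_{\sigma_1}|_{U(\tau)}$ with $(\alpha,\beta)$-entry $n^{(\alpha\beta)}_\tau(\omega')z^{m(\sigma_1^{(\alpha)})-m(\sigma_1^{(\beta)})}$ ($n$'s arbitrary complex constants) if $\omega'\subset\sigma_1^{(\alpha)}\cap\sigma_1^{(\beta)}$, $\alpha\ne\beta$, $m(\sigma_1^{(\alpha)})-m(\sigma_1^{(\beta)})\in\tau^\vee\cap M$, and $0$ otherwise; $S'_\tau=\{\sigma_1^{(\alpha)}\cap\sigma_1^{(\beta)}:m(\sigma_1^{(\alpha)})-m(\sigma_1^{(\beta)})\in\tau^\vee\cap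 M\}$; $\Theta_{\sigma_1\sigma_2}=\Theta_\tau=\prod_{\omega'\in S'_\tau}\exp N_\tau(\omega')$; $\Theta$ the collection of these; $G_{\sigma_1\sigma_2}=G^{sf}_{\sigma_1\sigma_2}\circ\Theta_{\sigma_1\sigma_2}$ on $U(\tau)$ (with $G_{\sigma_2\sigma_1}=G_{\sigma_1\sigma_2}^{-1}$). $\Theta$ is consistent if for every $\omega\in\Sigma$ and every cycle $\sigma_1,\dots,\sigma_{l+1}=\sigma_1$ of maximal cones containing $\omega$ with consecutive ones sharing an $(n-1)$-dimensional cone, $G_{\sigma_l\sigma_{l+1}}|_{U(\omega)}\circ\cdots\circ G_{\sigma_1\sigma_2}|_{U(\omega)}=\mathrm{Id}$. $\mathbb L$ is unobstructed if some $\mathcal L$ and consistent $\Theta$ exist. Then for arbitrary $\sigma_1,\sigma_2\in\Sigma(n)$, $G_{\sigma_1\sigma_2}$ on $U(\sigma_1\cap\sigma_2)$ is the composition of the $G$'s along any chain of maximal cones containing $\sigma_1\cap\sigma_2$ from $\sigma_1$ to $\sigma_2$ with consecutive ones sharing an $(n-1)$-cone; these form a cocycle, and $\mathcal E(\mathbb L,\mathcal L,\Theta)$ is the resulting toric vector bundle on $X_\Sigma$. *)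

From HB Require Import structures.
From mathcomp Require Import all_boot all_order all_algebra.
From mathcomp Require Import reals complex.

Set Implicit Arguments.
Unset Strict Implicit.
Unset Printing Implicit Defensive.

Import Order.TTheory GRing.Theory Num.Theory.
Local Open Scope ring_scope.
Local Open Scope complex_scope.

(* A rational polyhedral cone is given by a finite list of integral          *)
(* generators.                                                               *)

Section Geometry.
Variables (R : realType) (n : nat).

Definition pairZ (m v : 'rV[int]_n) : int := \sum_(k < n) m 0 k * v 0 k.
Definition pairR (m : 'rV[int]_n) (x : 'rV[R]_n) : R :=
  \sum_(k < n) (m 0 k)%:~R * x 0 k.
Definition intr (v : 'rV[int]_n) : 'rV[R]_n := map_mx (fun z : int => z%:~R) v.

Definition cone_set (g : seq 'rV[int]_n) (x : 'rV[R]_n) : Prop :=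
  exists lam : nat -> R, (forall k, 0 <= lam k) /\
    x = \sum_(k < size g) lam k *: intr (nth 0 g k).

Definition in_dual (g : seq 'rV[int]_n) (m : 'rV[int]_n) : bool :=
  all (fun v => 0 <= pairZ m v) g.

Definition cone_dim (g : seq 'rV[int]_n) : nat :=
  \rank (\matrix_(k < size g) intr (nth 0 g k)).

Definition same_cone (g h : seq 'rV[int]_n) : Prop :=
  forall x, cone_set g x <-> cone_set h x.

Definition is_face (gw gs : seq 'rV[int]_n) : Prop :=
  exists m, in_dual gs m /\
    forall x, cone_set gw x <-> (cone_set gs x /\ pairR m x = 0).

Definition strongly_convex (g : seq 'rV[int]_n) : Prop :=
  forall x, cone_set g x -> cone_set g (- x) -> x = 0.

(* a complete fan, given by an injective enumeration of its cones *)
Definition complete_fan (s : nat) (S : 'I_s -> seq 'rV[int]_n) : Prop :=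
  [/\ forall i, strongly_convex (S i),
      forall i j, same_cone (S i) (S j) -> i = j,
      forall i gw, is_face gw (S i) -> exists j, same_cone (S j) gw,
      forall i j, exists gw,
        [/\ forall x, cone_set gw x <-> (cone_set (S i) x /\ cone_set (S j) x),
            is_face gw (S i) & is_face gw (S j)]
    & forall x, exists i, cone_set (S i) x].

End Geometry.
Arguments cone_set R {n} g x.
Arguments pairR R {n} m x.
Arguments intr R {n} v.
Arguments same_cone R {n} g h.

(* L is a cone complex whose cones are indexed by 'I_nL, with face relation  *)
(* Lface (Lface w l : "w is a face of l"); Lpi is the map pi on cones; mu   *)
(* the weights; slope l is the integral slope of phi on the cone l (for     *)
(* non-maximal cones it is only meaningful modulo the orthogonal of the     *)
(* cone).  lift i a = sigma_i^(a) (lifts of maximal cones, with             *)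
(* multiplicity), adj i j a = the unique b with sigma_i^(a) /\ sigma_j^(b)  *)
(* of dimension n-1.                                                         *)

Record TLMS (n r : nat) := {
  nS : nat;
  fan : 'I_nS -> seq 'rV[int]_n;
  nL : nat;
  Lpi : 'I_nL -> 'I_nS;
  Lface : rel 'I_nL;
  mu : 'I_nL -> nat;
  slope : 'I_nL -> 'rV[int]_n;
  lift : 'I_nS -> 'I_r -> 'I_nL;
  adj : 'I_nS -> 'I_nS -> 'I_r -> 'I_r
}.
Arguments nS {n r} t.
Arguments fan {n r} t _.
Arguments nL {n r} t.
Arguments Lpi {n r} t _.
Arguments Lface {n r} t _ _.
Arguments mu {n r} t _.
Arguments slope {n r} t _.
Arguments lift {n r} t _ _.
Arguments adj {n r} t _ _ _.

Section TLMSdefs.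
Local Unset Implicit Arguments.
Variables (R : realType) (n r : nat) (L : TLMS n r).

Definition C := R[i].

Local Notation S := (fan L).
Local Notation cone := ('I_(nS L)).
Local Notation Lcone := ('I_(nL L)).

Definition fface (w i : cone) : Prop := is_face R (S w) (S i).

Definition maxc (i : cone) : Prop := cone_dim R (S i) = n.

Definition wall (t i j : cone) : Prop :=
  [/\ maxc i, maxc j, i <> j, cone_dim R (S t) = n.-1 &
      forall x, cone_set R (S t) x <-> (cone_set R (S i) x /\ cone_set R (S j) x)].

Definition adjacent (i j : cone) : Prop := exists t, wall t i j.

Definition mslope (i : cone) (a : 'I_r) : 'rV[int]_n := slope L (lift L i a).

Definition in_dual_inter (i j : cone) (u : 'rV[int]_n) : Prop :=
  forall x, cone_set R (S i) x -> cone_set R (S j) x -> 0 <= pairR R u x.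

Definition is_TLMS : Prop :=
  complete_fan R S /\
  [/\
      [/\ reflexive (Lface L), antisymmetric (Lface L) & transitive (Lface L)],
      (* pi maps each cone homeomorphically onto a cone: faces onto faces *)
      (forall w l, Lface L w l -> fface (Lpi L w) (Lpi L l)) /\
      (forall l j, fface j (Lpi L l) ->
          exists w, [/\ Lface L w l, Lpi L w = j &
            forall w', Lface L w' l -> Lpi L w' = j -> w' = w]),
      forall i, maxc i ->
        (forall l, Lpi L l = i -> (0 < mu L l)%N) /\
        (\sum_(l | Lpi L l == i) mu L l)%N = r,
      (* phi continuous and integral linear on cones *)
      (forall w l, Lface L w l ->
         forall v, v \in S (Lpi L w) -> pairZ (slope L l - slope L w) v = 0)
    &
      forall i, maxc i ->
        (forall a, Lpi L (lift L i a) = i) /\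
        (forall l, Lpi L l = i -> #|[set a | lift L i a == l]| = mu L l)].

Definition share_facet (a b : Lcone) : Prop :=
  exists w, [/\ Lface L w a, Lface L w b & cone_dim R (S (Lpi L w)) = n.-1].

(* The consequences of combinatorial indecomposability stated in the paper:
   for adjacent sigma_i, sigma_j each lift sigma_i^(a) determines a unique
   lift sigma_j^(b) with sigma_i^(a) /\ sigma_j^(b) of dimension n-1,
   and adj records it. *)
Definition comb_indec_conseq : Prop :=
  forall t i j a, wall t i j ->
    share_facet (lift L i a) (lift L j (adj L i j a)) /\
    forall b, share_facet (lift L i a) (lift L j b) -> b = adj L i j a.

(* g i j a = g^sf_{sigma_i^(a) sigma_j^(adj a)} for adjacent i < j
   (the reverse crossing carries the inverse constant). *)
Definition local_system (g : cone -> cone -> 'I_r -> C) : Prop :=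
  forall t i j a, wall t i j -> (i < j)%N -> g i j a != 0.

Definition ls_iso (g g' : cone -> cone -> 'I_r -> C) : Prop :=
  exists c : cone -> 'I_r -> C,
    (forall i a, maxc i -> c i a != 0) /\
    forall t i j a, wall t i j -> (i < j)%N ->
      g' i j a = c j (adj L i j a) * g i j a / c i a.

(* A T-equivariant morphism between the trivial bundles with torus-weighted
   frames 1(sigma^(a)) (weights u_a) and 1(sigma'^(b)) (weights w_b) is
   1(sigma^(a)) |-> sum_b A a b z^(u_a - w_b) 1(sigma'^(b)), A constant;
   it is recorded by its constant matrix A.  Composition F' o F corresponds
   to A_F *m A_F'. *)

(* regularity of such a morphism over U(sigma_i), both frames over sigma_i *)
Definition regular_on (i : cone) (A : 'M[C]_r) : Prop :=
  forall a b, A a b != 0 -> in_dual (S i) (mslope i a - mslope i b).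

Definition cvgC (u : nat -> C) (l : C) : Prop :=
  forall e : R, 0 < e -> exists N, forall k, (N <= k)%N -> `|u k - l| < e%:C.

Definition is_mxexp (A E : 'M[C]_r) : Prop :=
  forall a b, cvgC (fun K => (\sum_(k < K) (k`!%:R)^-1 *: A ^+ k) a b) (E a b).

(* cones of L are represented, inside L, by the set of cones of L they contain;
   this is the intersection sigma_i^(a) /\ sigma_i^(b) *)
Definition inter (a b : Lcone) : {set Lcone} :=
  [set w | Lface L w a && Lface L w b].

(* X in S'_tau, tau = sigma_i /\ sigma_j, frame of sigma_i *)
Definition inS' (i j : cone) (X : {set Lcone}) : Prop :=
  exists a b, [/\ X = inter (lift L i a) (lift L i b), X != set0 &
                  in_dual_inter i j (mslope i a - mslope i b)].

(* N0 is the constant matrix of some N_tau(X) (arbitrary constants n) *)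
Definition N_ok (i j : cone) (X : {set Lcone}) (N0 : 'M[C]_r) : Prop :=
  forall a b, N0 a b != 0 ->
    [/\ a != b, X \subset inter (lift L i a) (lift L i b) &
        in_dual_inter i j (mslope i a - mslope i b)].

(* T is (the constant matrix of) Theta_tau = prod_{X in S'_tau} exp N_tau(X)
   (as the entries of N_tau(X) are n z^(m_a - m_b), exp N_tau(X) has entries
   (exp N0) a b z^(m_a - m_b)) *)
Definition wc_matrix (i j : cone) (T : 'M[C]_r) : Prop :=
  exists sq : seq {set Lcone},
    [/\ uniq sq, forall X, X \in sq <-> inS' i j X &
      exists N0 E : {set Lcone} -> 'M[C]_r,
        (forall X, X \in sq -> N_ok i j X (N0 X) /\ is_mxexp (N0 X) (E X)) /\
        T = foldr (fun X acc => E X *m acc) 1%:M sq].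

(* a collection Theta of wall-crossing automorphisms (walls oriented by i < j) *)
Definition wc_collection (Th : cone -> cone -> 'M[C]_r) : Prop :=
  forall t i j, wall t i j -> (i < j)%N -> wc_matrix i j (Th i j).

Definition Gsf (g : cone -> cone -> 'I_r -> C) (i j : cone) : 'M[C]_r :=
  \matrix_(a, b) (if b == adj L i j a then g i j a else 0).

Definition Gmat g (Th : cone -> cone -> 'M[C]_r) (i j : cone) : 'M[C]_r :=
  Th i j *m Gsf g i j.

Definition Gfull g Th (a b : cone) : 'M[C]_r :=
  if (a < b)%N then Gmat g Th a b else invmx (Gmat g Th b a).

Fixpoint chain_mx g Th (a : cone) (sq : seq cone) : 'M[C]_r :=
  if sq is b :: sq' then Gfull g Th a b *m chain_mx g Th b sq' else 1%:M.

Fixpoint adj_chain (a : cone) (sq : seq cone) : Prop :=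
  if sq is b :: sq' then adjacent a b /\ adj_chain b sq' else True.

Definition consistent g Th : Prop :=
  forall (w i0 : cone) (sq : seq cone),
    (forall k, k \in i0 :: sq -> maxc k /\ fface w k) ->
    adj_chain i0 sq -> last i0 sq = i0 ->
    chain_mx g Th i0 sq = 1%:M.

Definition unobstructed : Prop :=
  exists g Th, [/\ local_system g, wc_collection Th & consistent g Th].

(* isomorphism of the toric vector bundles E(L, g, Th) and E(L, g', Th'):
   T-equivariant isomorphisms D_sigma : E_sigma -> E'_sigma over each U(sigma),
   compatible with the transition maps. *)
Definition bundle_iso g Th g' Th' : Prop :=
  exists D : cone -> 'M[C]_r,
    (forall i, maxc i ->
       [/\ D i \in unitmx, regular_on i (D i) & regular_on i (invmx (D i))]) /\
    forall t i j, wall t i j -> (i < j)%N ->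
      D i *m Gmat g' Th' i j = Gmat g Th i j *m D j.

End TLMSdefs.
Arguments C R.
Arguments fface R {n r} L.
Arguments maxc R {n r} L.
Arguments wall R {n r} L.
Arguments adjacent R {n r} L.
Arguments mslope {n r} L.
Arguments in_dual_inter R {n r} L.
Arguments is_TLMS R {n r} L.
Arguments share_facet R {n r} L.
Arguments comb_indec_conseq R {n r} L.
Arguments local_system R {n r} L.
Arguments ls_iso R {n r} L.
Arguments regular_on R {n r} L.
Arguments cvgC R.
Arguments is_mxexp R {r}.
Arguments inter {n r} L.
Arguments inS' R {n r} L.
Arguments N_ok R {n r} L.
Arguments wc_matrix R {n r} L.
Arguments wc_collection R {n r} L.
Arguments Gsf R {n r} L.
Arguments Gmat R {n r} L.
Arguments Gfull R {n r} L.
Arguments chain_mx R {n r} L.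
Arguments adj_chain R {n r} L.
Arguments consistent R {n r} L.
Arguments unobstructed R {n r} L.
Arguments bundle_iso R {n r} L.

From HB Require Import structures.
From mathcomp Require Import all_boot all_order all_algebra.
From mathcomp Require Import reals complex.
From mathcomp Require Import ring.

(* An isomorphism of local systems is a nonzero constant [c_i(a)] on every
   lift [sigma_i^(a)], and it relates the two semi-flat gluings by
   [G'^sf_ij = D_i^-1 G^sf_ij D_j] with [D_i = diag (c_i)].  So one rescales
   the frames [1(sigma_i^(a))] by [c_i(a)] and conjugates [Theta] by the same
   diagonal matrices: conjugating by a diagonal matrix preserves the zero
   pattern of every [N_tau], commutes with the exponential and with products,
   so [Theta'] is again a collection of wall-crossing automorphisms; the
   cocycle conditions for [(L', Theta')] are conjugates of those for
   [(L, Theta)]; and the frame changes [D_i], having torus weight zero, are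
   the bundle isomorphism. *)

Set Implicit Arguments.
Unset Strict Implicit.
Unset Printing Implicit Defensive.
Import Order.TTheory GRing.Theory Num.Theory.
Local Open Scope ring_scope.
Local Open Scope complex_scope.

Lemma cvgC_mull (R : realType) (k : C R) (u v : nat -> C R) (l : C R) :
  (forall K, v K = k * u K) -> cvgC R u l -> cvgC R v (k * l).
Proof.
move=> def_v cvg_u e e_gt0.
have [s [s_ge0 norm_k]] : exists s : R, 0 <= s /\ `|k| = s%:C.
  exists (Num.sqrt (complex.Re k ^+ 2 + complex.Im k ^+ 2)).
  by rewrite normc_def sqrtr_ge0.
have s1_gt0 : 0 < s + 1 by rewrite ltr_wpDl.
have [N HN] := cvg_u (e / (s + 1)) (divr_gt0 e_gt0 s1_gt0).
exists N => K /HN lt_uK.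
rewrite def_v -mulrBr normrM norm_k.
apply: (@le_lt_trans _ _ ((s + 1)%:C * `|u K - l|)).
  by apply: ler_wpM2r; rewrite ?normr_ge0 // lecR lerDl.
apply: (@lt_le_trans _ _ ((s + 1)%:C * (e / (s + 1))%:C)).
  by rewrite ltr_pM2l // ltcR.
by rewrite -rmorphM mulrC divfK ?gt_eqF.
Qed.

Section Reframe.
Variables (F : comUnitRingType) (r : nat).
Implicit Types (P Q M N : 'M[F]_r).

(* The matrix of a morphism once the source frame is changed by [P] and the
   target frame by [Q]. *)
Definition reframe P Q M : 'M[F]_r := invmx P *m M *m Q.

Lemma invmx_eq P Q : P *m Q = 1%:M -> invmx P = Q.
Proof.
move=> PQ1; have [uP _] := mulmx1_unit PQ1.
by rewrite -[RHS](mulKmx uP) PQ1 mulmx1.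
Qed.

Lemma mulmx_reframe P Q M : P \in unitmx -> P *m reframe P Q M = M *m Q.
Proof. by move=> uP; rewrite /reframe !mulmxA mulmxV // mul1mx. Qed.

Lemma reframe1 P : P \in unitmx -> reframe P P 1%:M = 1%:M.
Proof. by move=> uP; rewrite /reframe mulmx1 mulVmx. Qed.

Lemma reframeM P Q (Q' : 'M[F]_r) M N : Q \in unitmx ->
  reframe P Q M *m reframe Q Q' N = reframe P Q' (M *m N).
Proof. by move=> uQ; rewrite /reframe !mulmxA mulmxK. Qed.

Lemma reframeX P M k : P \in unitmx -> reframe P P M ^+ k = reframe P P (M ^+ k).
Proof.
move=> uP; elim: k => [|k IHk]; first by rewrite !expr0 reframe1.
by rewrite !exprS -!mulmxE IHk reframeM.
Qed.

Lemma reframe_invmx P Q M : P \in unitmx -> Q \in unitmx -> M \in unitmx ->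
  invmx (reframe P Q M) = reframe Q P (invmx M).
Proof.
move=> uP uQ uM; apply: invmx_eq.
by rewrite reframeM // mulmxV // reframe1.
Qed.

Lemma reframe_foldr T P (E : T -> 'M[F]_r) sq : P \in unitmx ->
  foldr (fun X acc => reframe P P (E X) *m acc) 1%:M sq =
  reframe P P (foldr (fun X acc => E X *m acc) 1%:M sq).
Proof.
move=> uP; elim: sq => [|X sq IHsq] /=; first by rewrite reframe1.
by rewrite IHsq reframeM.
Qed.

End Reframe.

Section DiagonalReframe.
Variables (F : fieldType) (r : nat).
Implicit Types (c d : 'I_r -> F) (M : 'M[F]_r).

Definition diagf c : 'M[F]_r := diag_mx (\row_a c a).

Lemma diagfV c : (forall a, c a != 0) ->
  diagf c *m diagf (fun a => (c a)^-1) = 1%:M.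
Proof. by move=> c_neq0; apply/matrixP=> a b; rewrite mulmx_diag !mxE mulfV. Qed.

Lemma unitmx_diagf c : (forall a, c a != 0) -> diagf c \in unitmx.
Proof. by move=> c_neq0; have [] := mulmx1_unit (diagfV c_neq0). Qed.

Lemma invmx_diagf c : (forall a, c a != 0) ->
  invmx (diagf c) = diagf (fun a => (c a)^-1).
Proof. by move=> c_neq0; apply/invmx_eq/diagfV. Qed.

Lemma reframe_diagfE c d M a b : (forall a, c a != 0) ->
  reframe (diagf c) (diagf d) M a b = (c a)^-1 * M a b * d b.
Proof.
by move=> c_neq0; rewrite /reframe invmx_diagf // mul_mx_diag mxE mul_diag_mx !mxE.
Qed.

End DiagonalReframe.

Lemma is_mxexp_reframe_diagf (R : realType) (r : nat) (c : 'I_r -> C R)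
    (A E : 'M[C R]_r) : (forall a, c a != 0) ->
  is_mxexp R A E ->
  is_mxexp R (reframe (diagf c) (diagf c) A) (reframe (diagf c) (diagf c) E).
Proof.
move=> c_neq0 expAE a b.
have -> : reframe (diagf c) (diagf c) E a b = (c a)^-1 * c b * E a b.
  by rewrite reframe_diagfE // mulrAC.
apply: cvgC_mull (expAE a b) => K.
rewrite !summxE mulr_sumr; apply: eq_bigr => k _.
by rewrite !mxE reframeX ?unitmx_diagf // reframe_diagfE //; ring.
Qed.

Section Multisection.
Variables (R : realType) (n r : nat) (L : TLMS n r).
Local Notation cone := ('I_(nS L)).

Lemma wall_sym t (i j : cone) : wall R L t i j -> wall R L t j i.
Proof.
case=> mi mj nij dim_t t_eq; split=> // [/esym //|x].
by rewrite t_eq; split; case.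
Qed.

Lemma fan_common_face (i j : cone) : is_TLMS R L ->
  exists w, fface R L w i /\ fface R L w j.
Proof.
case=> [[_ _ face_in_fan inter_face _] _].
have [gw [_ gw_i gw_j]] := inter_face i j.
have [w w_gw] := face_in_fan i gw gw_i.
have w_face k : is_face R gw (fan L k) -> fface R L w k.
  by case=> m [m_dual gw_eq]; exists m; split=> // x; rewrite -gw_eq.
by exists w; split; apply: w_face.
Qed.

Lemma regular_on_diag (i : cone) (d : 'rV[C R]_r) : regular_on R L i (diag_mx d).
Proof.
move=> a b; rewrite mxE; have [<- _|] := eqVneq a b; last by rewrite mulr0n eqxx.
rewrite subrr; apply/allP => v _.
by rewrite /pairZ big1 // => k _; rewrite mxE mul0r.
Qed.

Lemma N_ok_reframe_diagf (i j : cone) X (c : 'I_r -> C R) (N0 : 'M[C R]_r) :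
  (forall a, c a != 0) -> N_ok R L i j X N0 ->
  N_ok R L i j X (reframe (diagf c) (diagf c) N0).
Proof.
move=> c_neq0 N0_ok a b; rewrite reframe_diagfE // => nz_ab; apply: N0_ok.
by apply: contraNneq nz_ab => ->; rewrite mulr0 mul0r.
Qed.

Lemma wc_matrix_reframe_diagf (i j : cone) (c : 'I_r -> C R) (T : 'M[C R]_r) :
  (forall a, c a != 0) -> wc_matrix R L i j T ->
  wc_matrix R L i j (reframe (diagf c) (diagf c) T).
Proof.
move=> c_neq0 [sq [uniq_sq sq_S' [N0 [E [NE_ok ->]]]]].
exists sq; split=> //.
exists (fun X => reframe (diagf c) (diagf c) (N0 X)).
exists (fun X => reframe (diagf c) (diagf c) (E X)).
split; last by rewrite reframe_foldr ?unitmx_diagf.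
move=> X /NE_ok [N0_ok expNE]; split.
  exact: N_ok_reframe_diagf.
exact: is_mxexp_reframe_diagf.
Qed.

Variables (g : cone -> cone -> 'I_r -> C R) (Th : cone -> cone -> 'M[C R]_r).
Hypotheses (L_TLMS : is_TLMS R L) (Th_consistent : consistent R L g Th).

(* Consistency around the cycle [i, j, i] makes [G_ji G_ij] the identity. *)
Lemma Gmat_unitmx t (i j : cone) : wall R L t i j -> (i < j)%N ->
  Gmat R L g Th i j \in unitmx.
Proof.
move=> wall_ij lt_ij; have [w [w_i w_j]] := fan_common_face i j L_TLMS.
have [mi mj _ _ _] := wall_ij.
have cycle_cones k : k \in [:: i; j; i] -> maxc R L k /\ fface R L w k.
  by rewrite !inE => /or3P[] /eqP->.
have cycle_adj : adj_chain R L i [:: j; i].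
  by split; [exists t | split; [exists t; apply: wall_sym|]].
have := Th_consistent cycle_cones cycle_adj (erefl _).
by rewrite /= /Gfull lt_ij ltnNge ltnW //= mulmx1 => /mulmx1_unit[].
Qed.

Variables (g' : cone -> cone -> 'I_r -> C R) (c : cone -> 'I_r -> C R).
Hypotheses (c_neq0 : forall i a, maxc R L i -> c i a != 0)
  (g'_eq : forall t i j a, wall R L t i j -> (i < j)%N ->
     g' i j a = c j (adj L i j a) * g i j a / c i a).

Definition Th_reframed (i j : cone) := reframe (diagf (c i)) (diagf (c i)) (Th i j).

Local Notation Th' := Th_reframed.

Lemma unitmx_frame (i : cone) : maxc R L i -> diagf (c i) \in unitmx.
Proof. by move=> mi; apply: unitmx_diagf => a; apply: c_neq0. Qed.

Lemma Gsf_reframe t (i j : cone) : wall R L t i j -> (i < j)%N ->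
  Gsf R L g' i j = reframe (diagf (c i)) (diagf (c j)) (Gsf R L g i j).
Proof.
move=> wall_ij lt_ij; have [mi _ _ _ _] := wall_ij.
apply/matrixP => a b; rewrite reframe_diagfE => [|a']; last exact: c_neq0.
rewrite !mxE; case: eqP => [->|_]; last by rewrite mulr0 mul0r.
by rewrite (g'_eq _ wall_ij lt_ij); ring.
Qed.

Lemma Gmat_reframe t (i j : cone) : wall R L t i j -> (i < j)%N ->
  Gmat R L g' Th' i j =
  reframe (diagf (c i)) (diagf (c j)) (Gmat R L g Th i j).
Proof.
move=> wall_ij lt_ij; have [mi _ _ _ _] := wall_ij.
by rewrite /Gmat (Gsf_reframe wall_ij) // reframeM ?unitmx_frame.
Qed.

Lemma Gfull_reframe (i j : cone) : adjacent R L i j ->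
  Gfull R L g' Th' i j =
  reframe (diagf (c i)) (diagf (c j)) (Gfull R L g Th i j).
Proof.
case=> t wall_ij; rewrite /Gfull; case: ltnP => [|le_ji].
  exact: Gmat_reframe wall_ij.
have [mi mj neq_ij _ _] := wall_ij.
have lt_ji : (j < i)%N.
  by rewrite ltn_neqAle le_ji andbT; apply: contra_not_neq neq_ij => /val_inj.
have wall_ji := wall_sym wall_ij.
by rewrite (Gmat_reframe wall_ji) // reframe_invmx ?unitmx_frame ?(Gmat_unitmx wall_ji).
Qed.

Lemma chain_mx_reframe (i0 : cone) sq :
  (forall k, k \in i0 :: sq -> maxc R L k) -> adj_chain R L i0 sq ->
  chain_mx R L g' Th' i0 sq =
  reframe (diagf (c i0)) (diagf (c (last i0 sq))) (chain_mx R L g Th i0 sq).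
Proof.
elim: sq i0 => [|k sq IHsq] i0 max_chain /=.
  by move=> _; rewrite reframe1 // unitmx_frame //; apply/max_chain/mem_head.
case=> adj_i0k adj_sq; rewrite Gfull_reframe // IHsq // => [|k' k'_in]; last first.
  by apply: max_chain; rewrite inE k'_in orbT.
by rewrite reframeM // unitmx_frame //; apply: max_chain; rewrite !inE eqxx orbT.
Qed.

Lemma consistent_reframe : consistent R L g' Th'.
Proof.
move=> w i0 sq cones_ok adj_sq last_i0.
have [mi0 _] := cones_ok i0 (mem_head _ _).
rewrite chain_mx_reframe // => [|k /cones_ok[]//].
by rewrite (Th_consistent cones_ok) // last_i0 reframe1 ?unitmx_frame.
Qed.

Lemma wc_collection_reframe : wc_collection R L Th -> wc_collection R L Th'.
Proof.
move=> wc_Th t i j wall_ij lt_ij; have [mi _ _ _ _] := wall_ij.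
apply: wc_matrix_reframe_diagf (wc_Th _ _ _ wall_ij lt_ij) => a.
exact: c_neq0.
Qed.

Lemma bundle_iso_reframe : bundle_iso R L g Th g' Th'.
Proof.
exists (fun i => diagf (c i)); split=> [i mi | t i j wall_ij lt_ij].
  have ci_neq0 a : c i a != 0 by apply: c_neq0.
  split; [exact: unitmx_frame | exact: regular_on_diag |].
  by rewrite invmx_diagf //; apply: regular_on_diag.
have [mi _ _ _ _] := wall_ij.
by rewrite (Gmat_reframe wall_ij) // mulmx_reframe ?unitmx_frame.
Qed.

End Multisection.

Theorem proposition4p19 (R : realType) (n r : nat) (L : TLMS n r)
    (g : 'I_(nS L) -> 'I_(nS L) -> 'I_r -> C R)
    (Th : 'I_(nS L) -> 'I_(nS L) -> 'M[C R]_r) :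
  is_TLMS R L -> comb_indec_conseq R L -> unobstructed R L ->
  local_system R L g -> wc_collection R L Th -> consistent R L g Th ->
  forall g' : 'I_(nS L) -> 'I_(nS L) -> 'I_r -> C R,
    local_system R L g' -> ls_iso R L g g' ->
    exists Th' : 'I_(nS L) -> 'I_(nS L) -> 'M[C R]_r,
      [/\ wc_collection R L Th', consistent R L g' Th'
        & bundle_iso R L g Th g' Th'].
Proof.
move=> L_TLMS _ _ _ wc_Th Th_consistent g' _ [c [c_neq0 g'_eq]].
exists (Th_reframed Th c); split.
- exact: (wc_collection_reframe c_neq0 wc_Th).
- exact: (consistent_reframe L_TLMS Th_consistent c_neq0 g'_eq).
- exact: (bundle_iso_reframe Th c_neq0 g'_eq).
Qed.
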